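(* Let $G$ be a directed acyclic contractor network and let $d>0$ be the maximum number of edges in a directed path of $G$. For $S\subseteq\mathcal V$, $\mathbf y\in\{0,1\}^S$ and $\mathbf z\in\{0,1\}^{S'}$ with $S'\supseteq\bigcup_{i\in S}\delta_{\mathrm{in}}(i)$, put $$q_S(\mathbf y\mid\mathbf z)=\prod_{i\in S}p_i(\mathbf z)^{y_i}\big(1-p_i(\mathbf z)\big)^{1-y_i},\qquad p_i(\mathbf z)=(1-\alpha_i)r_i+\alpha_i\sum_{j\in\delta_{\mathrm{in}}(i)}w_{ij}z_j.$$ Then for every $t\ge d$ and every $\mathbf x\in\{0,1\}^n$, $\Pr(\mathbf X^t=\mathbf x)=\pi(\mathbf x)$, and $$\Pr(\mathbf X^t=\mathbf x)=\sum_{\mathbf z^1\in\{0,1\}^{\Delta^1}}\cdots\sum_{\mathbf z^d\in\{0,1\}^{\Delta^d}}q_{\mathcal V}(\mathbf x\mid\mathbf z^1)\prod_{k=1}^{d-1}q_{\Delta^k}(\mathbf z^k\mid\mathbf z^{k+1})\prod_{i\in\Delta^d}r_i^{z^d_i}(1-r_i)^{1-z^d_i},$$ where $\mathbf z^k$ plays the role of the state of the nodes of $\Delta^k$ at time $t-k$. (Here every node of $\Delta^d$ is a pure principal, and $\delta_{\mathrm{in}}(i)\subseteq\Delta^{k+1}$ for $i\in\Delta^k$, so all terms are well defined.)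
   Context: A contractor network is a finite directed graph $G=(\mathcal V,\mathcal E)$ with $n=|\mathcal V|$ nodes, without multiple edges, in which every node has at least one incident edge; here $G$ is assumed acyclic (no directed cycles and no self-loops). For $i\in\mathcal V$ let $\delta_{\mathrm{in}}(i)=\{j:(j,i)\in\mathcal E\}$ and $\delta_{\mathrm{out}}(i)=\{k:(i,k)\in\mathcal E\}$. A node $i$ is a pure principal if $\delta_{\mathrm{in}}(i)=\emptyset$, a pure obligee if $\delta_{\mathrm{out}}(i)=\emptyset$, and an intermediary otherwise. Each edge $(j,i)\in\mathcal E$ carries a weight $w_{ij}>0$; $w_{ij}=0$ if $(j,i)\notin\mathcal E$; for every $i$ with $\delta_{\mathrm{in}}(i)\neq\emptyset$, $\sum_{j\in\delta_{\mathrm{in}}(i)}w_{ij}=1$. Risk scores: $r_i\in(0,1)$ if $i$ is not a pure obligee, $r_i=0$ for pure obligees. Propagation parameters: $\alpha_i=0$ for pure principals, $\alpha_i=1$ for pure obligees, $\alpha_i\in(0,1)$ for intermediaries. Failure process $(\mathbf X^t)_{t\in\mathbb N}$ on $\{0,1\}^n$: independent $X_i^0\sim\mathrm{Bernoulli}(r_i)$; for $t\ge0$, conditionally on $(\mathbf X^0,\dots,\mathbf X^t)$ the $X_i^{t+1}$ are independent with $X_i^{t+1}\sim\mathrm{Bernoulli}\big((1-\alpha_i)r_i+\alpha_i\sum_{j\in\delta_{\mathrm{in}}(i)}w_{ij}X_j^t\big)$; $\pi(\mathbf x)=\lim_t\Pr(\mathbf X^t=\mathbf x)$ is its stationary distribution.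 In-neighbor layers: $\Delta^1=\bigcup_{i\in\mathcal V}\delta_{\mathrm{in}}(i)$ and, for $k>1$, $\Delta^k=\bigcup_{i\in\Delta^{k-1}}\delta_{\mathrm{in}}(i)$; equivalently $\Delta^k$ is the set of nodes from which some directed path with $k$ edges starts. *)

From HB Require Import structures.
From mathcomp Require Import all_boot all_order all_algebra.
From mathcomp Require Import all_classical all_reals all_analysis.
Set Implicit Arguments. Unset Strict Implicit. Unset Printing Implicit Defensive.
Import Order.TTheory GRing.Theory Num.Theory numFieldNormedType.Exports.
Local Open Scope ring_scope.

(* Nodes are 'I_n ; e j i = true  iff  (j,i) is an edge.
   w i j = weight of edge (j,i);  a state is x : {ffun 'I_n -> bool}. *)

Section Net.
Variables (R : realType) (n : nat) (e : rel 'I_n)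
  (w : 'I_n -> 'I_n -> R) (r alpha : 'I_n -> R).

Definition din (i : 'I_n) : {set 'I_n} := [set j | e j i].
Definition dout (i : 'I_n) : {set 'I_n} := [set k | e i k].

(* Delta 0 = V, Delta (k+1) = union of in-neighbourhoods of Delta k;
   so Delta k (k >= 1) is the paper's Delta^k. *)
Fixpoint Delta (k : nat) : {set 'I_n} :=
  if k is k'.+1 then \bigcup_(i in Delta k') din i else [set: 'I_n].

Definition pfail (i : 'I_n) (z : {ffun 'I_n -> bool}) : R :=
  (1 - alpha i) * r i + alpha i * \sum_(j in din i) w i j * (z j)%:R.

Definition qcond (S : {set 'I_n}) (y z : {ffun 'I_n -> bool}) : R :=
  \prod_(i in S) (pfail i z ^+ y i * (1 - pfail i z) ^+ (1 - y i)).

Definition init_law (S : {set 'I_n}) (x : {ffun 'I_n -> bool}) : R :=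
  \prod_(i in S) (r i ^+ x i * (1 - r i) ^+ (1 - x i)).

(* law t x = Pr(X^t = x) for the Markov chain of the failure process *)
Fixpoint law (t : nat) (x : {ffun 'I_n -> bool}) : R :=
  if t is t'.+1 then \sum_(y : {ffun 'I_n -> bool}) law t' y * qcond [set: 'I_n] x y
  else init_law [set: 'I_n] x.

Definition stationary (x : {ffun 'I_n -> bool}) : R :=
  lim ((fun t => law t x) @ \oo)%classic.

(* the k-th (k = 1..d) state in a tuple z = (z^1, ..., z^d) *)
Definition zat (d : nat) (z : {ffun 'I_d -> {ffun 'I_n -> bool}}) (k : nat)
  : {ffun 'I_n -> bool} :=
  if insub k.-1 is Some o then z o else [ffun=> false].

(* z^k in {0,1}^{Delta^k}: encoded as states vanishing outside Delta^k *)
Definition supported (d : nat) (z : {ffun 'I_d -> {ffun 'I_n -> bool}}) : bool :=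
  [forall k : 'I_d, forall i : 'I_n, (i \notin Delta k.+1) ==> ~~ z k i].

Definition formula (d : nat) (x : {ffun 'I_n -> bool}) : R :=
  \sum_(z : {ffun 'I_d -> {ffun 'I_n -> bool}} | supported z)
     (qcond [set: 'I_n] x (zat z 1)
      * (\prod_(1 <= k < d) qcond (Delta k) (zat z k) (zat z k.+1))
      * init_law (Delta d) (zat z d)).

End Net.

Definition dag_network (R : realType) (n : nat) (e : rel 'I_n)
  (w : 'I_n -> 'I_n -> R) (r alpha : 'I_n -> R) : Prop :=
  [/\ (forall i j, e i j -> ~~ connect e j i),
      (forall i, exists j, e i j || e j i),
      ((forall i j, (e j i -> 0 < w i j) /\ (~~ e j i -> w i j = 0)) /\
       (forall i, din e i != finset.set0 -> \sum_(j in din e i) w i j = 1)),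
      ((forall i, dout e i != finset.set0 -> 0 < r i < 1) /\ (forall i, dout e i = finset.set0 -> r i = 0))
    & ((forall i, din e i = finset.set0 -> alpha i = 0) /\
       (forall i, dout e i = finset.set0 -> alpha i = 1) /\
       (forall i, din e i != finset.set0 -> dout e i != finset.set0 -> 0 < alpha i < 1))].

Definition max_path_len (n : nat) (e : rel 'I_n) (d : nat) : Prop :=
  (exists (x : 'I_n) (p : seq 'I_n), path e x p /\ size p = d) /\
  (forall (x : 'I_n) (p : seq 'I_n), path e x p -> (size p <= d)%N).

From Pilot Require Import Defs.
From HB Require Import structures.
From mathcomp Require Import all_boot all_order all_algebra.
From mathcomp Require Import all_classical all_reals all_analysis.
Import Order.TTheory GRing.Theory Num.Theory numFieldNormedType.Exports.
Local Open Scope ring_scope.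

(* The law of X^(t+1) restricted to a set S of nodes only depends on the law
   of X^t restricted to the parents of S: the transition kernel factorizes over
   the nodes, the factors of the nodes outside S sum to 1, and p_i only reads
   the in-neighbours of i.  Starting from S = V and iterating d times reaches
   Delta^d, whose parents form Delta^(d+1) = {} since no path has d+1 edges.
   The nodes of Delta^d are thus sources, with alpha = 0, so at every time
   their marginal is the product of the Bernoulli(r_i) laws.  Hence Pr(X^t = x)
   equals the formula for every t >= d, and the sequence being eventually
   constant, this common value is also its limit pi(x). *)

Section Marginals.
Variables (R : realType) (n : nat) (e : rel 'I_n)
  (w : 'I_n -> 'I_n -> R) (r alpha : 'I_n -> R).

Local Notation state := {ffun 'I_n -> bool}.
Local Notation law := (law e w r alpha).
Local Notation qcond := (qcond e w r alpha).
Local Notation pfail := (pfail e w r alpha).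
Local Notation Delta := (Delta e).

Definition restr (S : {set 'I_n}) (x : state) : state :=
  [ffun i => (i \in S) && x i].

Lemma restrE S x i : restr S x i = (i \in S) && x i.
Proof. by rewrite ffunE. Qed.

Lemma restr_id S x : restr S (restr S x) = restr S x.
Proof. by apply/ffunP => i; rewrite !restrE andbA andbb. Qed.

Lemma restr_fixedE S (u : state) :
  (restr S u == u) = [forall i, (i \notin S) ==> ~~ u i].
Proof.
apply/eqP/forallP => [<- i|u_out].
  by apply/implyP => iS; rewrite restrE (negbTE iS).
apply/ffunP => i; rewrite restrE; case: (boolP (i \in S)) => //= iS.
by have /negbTE -> := implyP (u_out i) iS.
Qed.

Lemma eq_restrE S x y : restr S y = y ->
  (restr S x == y) = [forall i, (i \in S) ==> (x i == y i)].
Proof.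
move=> Sy; apply/eqP/forallP => [<- i|xy].
  by apply/implyP => iS; rewrite restrE iS.
apply/ffunP => i; rewrite restrE; case: (boolP (i \in S)) => iS /=.
  exact/eqP/(implyP (xy i)).
by rewrite -Sy restrE (negbTE iS).
Qed.

Definition bernoulli (p : R) (b : bool) : R := p ^+ b * (1 - p) ^+ (1 - b).

Lemma bernoulli_sum p : bernoulli p true + bernoulli p false = 1.
Proof. by rewrite /bernoulli /= expr1 expr0 mulr1 mul1r addrC subrK. Qed.

Lemma prod_setT (F : 'I_n -> R) : \prod_(i in [set: 'I_n]%SET) F i = \prod_i F i.
Proof. by apply: eq_bigl => i; rewrite finset.in_setT. Qed.

Lemma sum_restr_prod (g : 'I_n -> bool -> R) S (y : state) :
  (forall i, g i true + g i false = 1) -> restr S y = y ->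
  \sum_(x | restr S x == y) \prod_i g i (x i) = \prod_(i in S) g i (y i).
Proof.
move=> g_sum1 Sy.
pose h i b := if i \in S then g i b * (b == y i)%:R else g i b.
transitivity (\sum_(x : state) \prod_i h i (x i)).
  rewrite [RHS](bigID (fun x => restr S x == y)) /= [X in _ = _ + X]big1 ?addr0.
    apply: eq_bigr => x; rewrite eq_restrE // => /forallP xy.
    apply: eq_bigr => i _; rewrite /h; case: ifP => // iS.
    by rewrite (eqP (implyP (xy i) iS)) eqxx mulr1.
  move=> x; rewrite eq_restrE // => /forallPn [i].
  rewrite negb_imply => /andP [iS /negbTE xy].
  by rewrite (bigD1 i) //= /h iS xy mulr0 mul0r.
rewrite -(bigA_distr_bigA h) [RHS]big_mkcond; apply: eq_bigr => i _.
rewrite big_bool /h /=; case: ifP => iS; last exact: g_sum1.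
by case: (y i); rewrite /= ?mulr1 ?mulr0 ?addr0 ?add0r.
Qed.

Definition marginal t S (y : state) : R := \sum_(x | restr S x == y) law t x.

Definition parents (S : {set 'I_n}) : {set 'I_n} := \bigcup_(i in S) din e i.

Lemma marginal_setT t x : marginal t [set: 'I_n]%SET x = law t x.
Proof.
rewrite /marginal (eq_bigl (pred1 x)) ?big_pred1_eq // => y /=.
by congr (_ == _); apply/ffunP => i; rewrite restrE finset.in_setT.
Qed.

Lemma marginal0 S y : restr S y = y -> marginal 0 S y = init_law r S y.
Proof.
move=> Sy; rewrite /marginal /= /init_law.
under eq_bigr => x _ do rewrite prod_setT.
exact: (sum_restr_prod (fun i => bernoulli (r i)) _ _ (fun i => bernoulli_sum _)).
Qed.

Lemma sum_qcond_restr S y z : restr S y = y ->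
  \sum_(x | restr S x == y) qcond [set: 'I_n]%SET x z = qcond S y z.
Proof.
move=> Sy; under eq_bigr => x _ do rewrite /Defs.qcond prod_setT.
exact: (sum_restr_prod (fun i => bernoulli (pfail i z)) _ _ (fun i => bernoulli_sum _)).
Qed.

Lemma pfail_restr_parents (S : {set 'I_n}) i z : i \in S ->
  pfail i (restr (parents S) z) = pfail i z.
Proof.
move=> iS; rewrite /Defs.pfail; congr (_ + _ * _); apply: eq_bigr => j ji.
by rewrite restrE (_ : j \in parents S) //; apply/bigcupP; exists i.
Qed.

Lemma qcond_restr_parents (S : {set 'I_n}) y z :
  qcond S y (restr (parents S) z) = qcond S y z.
Proof. by apply: eq_bigr => i iS; rewrite pfail_restr_parents. Qed.

Lemma marginalS t S y : restr S y = y ->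
  marginal t.+1 S y =
  \sum_(u | restr (parents S) u == u) marginal t (parents S) u * qcond S y u.
Proof.
move=> Sy; rewrite /marginal /= exchange_big /=.
under eq_bigr do rewrite -big_distrr /= sum_qcond_restr // -qcond_restr_parents.
rewrite (partition_big (restr (parents S)) (fun u => restr (parents S) u == u)) /=.
  apply: eq_bigr => u _; rewrite big_distrl /=.
  by apply: eq_bigr => z /eqP <-.
by move=> z _; rewrite restr_id.
Qed.

Definition state0 : state := [ffun=> false].

Lemma restr_set0 u : restr finset.set0 u = state0.
Proof. by apply/ffunP => i; rewrite restrE !ffunE inE. Qed.

Lemma sum_restr_set0 (F : state -> R) :
  \sum_(u | restr finset.set0 u == u) F u = F state0.
Proof.
by rewrite (eq_bigl (pred1 state0)) ?big_pred1_eq // => u; rewrite restr_set0 eq_sym.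
Qed.

Lemma marginal_set0 t : marginal t finset.set0 state0 = 1.
Proof.
elim: t => [|t IHt]; first by rewrite marginal0 ?restr_set0 // /init_law big_set0.
have parents0 : parents finset.set0 = finset.set0 by rewrite /parents big_set0.
rewrite marginalS ?restr_set0 // parents0 sum_restr_set0 IHt mul1r.
by rewrite /Defs.qcond big_set0.
Qed.

Lemma marginal_orphans t S y :
  (forall i, din e i = finset.set0 -> alpha i = 0) -> parents S = finset.set0 ->
  restr S y = y -> marginal t S y = init_law r S y.
Proof.
move=> alpha0 parentsS0 Sy; case: t => [|t]; first exact: marginal0.
rewrite marginalS // parentsS0 sum_restr_set0 marginal_set0 mul1r.
apply: eq_bigr => i iS.
have dini0 : din e i = finset.set0.
  by apply/eqP; rewrite -finset.subset0 -parentsS0; exact: (finset.bigcup_sup i iS).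
by rewrite /Defs.pfail alpha0 // subr0 mul1r mul0r addr0.
Qed.

Lemma Delta_path k j : j \in Delta k -> exists p, path e j p /\ size p = k.
Proof.
elim: k j => [|k IHk] j /=; first by exists [::].
case/bigcupP => i /IHk [p [ip <-]]; rewrite inE => ji.
by exists (i :: p); rewrite /= ji ip.
Qed.

Lemma Delta_eq0 k :
  (forall j p, path e j p -> (size p < k)%N) -> Delta k = finset.set0.
Proof.
move=> short; apply/finset.setP => j; rewrite finset.in_set0; apply/negP.
by case/Delta_path => p [jp sz]; have := short _ _ jp; rewrite sz ltnn.
Qed.

Section Expansion.
Variable d : nat.
Local Notation levels := {ffun 'I_d -> state}.

Lemma supportedP (z : levels) :
  reflect (forall k : 'I_d, restr (Delta k.+1) (z k) = z k) (supported e z).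
Proof.
apply: (iffP forallP) => z_supp k; last by rewrite -restr_fixedE; apply/eqP.
by apply/eqP; rewrite restr_fixedE; exact: z_supp.
Qed.

Lemma restr_state0 S : restr S state0 = state0.
Proof. by apply/ffunP => i; rewrite restrE ffunE andbF. Qed.

Lemma zat_restr (z : levels) k : supported e z -> (0 < k)%N ->
  restr (Delta k) (zat z k) = zat z k.
Proof.
move=> /supportedP z_supp k_gt0; rewrite /zat.
case: insubP => [k1 _ k1_val|_]; last exact: restr_state0.
by have := z_supp k1; rewrite k1_val prednK.
Qed.

Definition set_level (z : levels) (k : 'I_d) (u : state) : levels :=
  [ffun k' => if k' == k then u else z k'].

Lemma zat_set_level (z : levels) k0 u k : (0 < k)%N ->
  zat (set_level z k0 u) k = if k == k0.+1 then u else zat z k.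
Proof.
move=> k_gt0; rewrite /zat; case: insubP => [k1 _ k1_val|k_out].
  by rewrite ffunE -val_eqE /= k1_val -[in RHS](prednK k_gt0) eqSS.
by case: eqP => // k_eq; move: k_out; rewrite k_eq /= ltn_ord.
Qed.

(* Index k : 'I_d holds level k+1, so this asks levels j+1, ..., d to vanish. *)
Definition supported_upto (j : nat) (z : levels) :=
  supported e z && [forall k : 'I_d, (j <= k)%N ==> (z k == state0)].

Lemma sum_supported_uptoS j (lt_jd : (j < d)%N) (G : levels -> R) :
  \sum_(z | supported_upto j.+1 z) G z =
  \sum_(z | supported_upto j z)
     \sum_(u | restr (Delta j.+1) u == u) G (set_level z (Ordinal lt_jd) u).
Proof.
set jo := Ordinal lt_jd.
rewrite (partition_big (fun z => set_level z jo state0) (supported_upto j)); last first.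
  move=> z /andP [/supportedP z_supp /forallP z_zero]; apply/andP; split.
    apply/supportedP => k; rewrite ffunE; case: eqP => _; last exact: z_supp.
    exact: restr_state0.
  apply/forallP => k; apply/implyP => le_jk; rewrite ffunE.
  case: (k =P jo) => [//|/eqP ne_kjo]; apply: (implyP (z_zero k)).
  rewrite ltn_neqAle le_jk andbT; apply: contraNneq ne_kjo => jk.
  by apply/eqP/val_inj; exact: esym jk.
apply: eq_bigr => z /andP [z_supp /forallP z_zero].
have zjo : z jo = state0 by apply/eqP/(implyP (z_zero jo)).
rewrite (reindex_onto (set_level z jo) (fun z' => z' jo)); last first.
  move=> z' /andP [_ /eqP <-]; apply/ffunP => k; rewrite !ffunE.
  by case: eqP => [->|].
apply: eq_bigl => u.
have -> : set_level z jo u jo = u by rewrite ffunE eqxx.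
have -> : set_level (set_level z jo u) jo state0 = z.
  by apply/ffunP => k; rewrite !ffunE; case: eqP => [->|].
rewrite !eqxx !andbT; apply/idP/idP.
  by case/andP => /supportedP/(_ jo); rewrite ffunE eqxx => ->.
move=> /eqP u_supp; apply/andP; split.
  apply/supportedP => k; rewrite ffunE; case: eqP => [->|_] //.
  exact: (elimT (supportedP _) z_supp).
apply/forallP => k; apply/implyP => lt_jk; rewrite ffunE.
case: (k =P jo) => [k_jo|_]; first by move: lt_jk; rewrite k_jo ltnn.
exact: (implyP (z_zero k) (ltnW lt_jk)).
Qed.

(* The expansion after j steps: levels 1..j are summed out explicitly, the
   rest is still the marginal of X^(t-j) on Delta^j. *)
Definition partial_formula j t x := \sum_(z | supported_upto j z)
  (qcond [set: 'I_n]%SET x (zat z 1)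
   * \prod_(1 <= k < j) qcond (Delta k) (zat z k) (zat z k.+1)
   * marginal (t - j) (Delta j) (zat z j)).

Lemma law_partial_formula1 t x : (0 < d)%N -> (0 < t)%N ->
  law t x = partial_formula 1 t x.
Proof.
case: t => // t d_gt0 _.
have Vx : restr [set: 'I_n]%SET x = x.
  by apply/ffunP => i; rewrite restrE finset.in_setT.
rewrite -marginal_setT marginalS // /partial_formula (sum_supported_uptoS _ d_gt0).
rewrite (eq_bigl (pred1 [ffun=> state0])); last first.
  move=> z /=; apply/idP/eqP => [/andP [_ /forallP z0]|->].
    by apply/ffunP => k; rewrite ffunE; apply/eqP; exact: z0.
  apply/andP; split; last by apply/forallP => k; rewrite ffunE eqxx implybT.
  by apply/supportedP => k; rewrite ffunE restr_state0.
rewrite big_pred1_eq; apply: eq_bigr => u _.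
by rewrite !zat_set_level //= big_geq // mulr1 subn1 mulrC.
Qed.

Lemma partial_formulaS j t x (lt_j1d : (j.+1 < d)%N) : (j.+2 <= t)%N ->
  partial_formula j.+1 t x = partial_formula j.+2 t x.
Proof.
move=> le_j2t; rewrite [RHS]/partial_formula (sum_supported_uptoS _ lt_j1d).
apply: eq_bigr => z /andP [z_supp _].
rewrite -(subnSK le_j2t) marginalS ?zat_restr // big_distrr.
apply: eq_bigr => u _; set z' := set_level z (Ordinal lt_j1d) u.
have zat_z' k : (0 < k)%N -> k != j.+2 -> zat z' k = zat z k.
  by move=> k_gt0 /negbTE k_ne; rewrite zat_set_level // k_ne.
have zat_z'_j2 : zat z' j.+2 = u by rewrite zat_set_level // eqxx.
have prod_z' : \prod_(1 <= k < j.+1) qcond (Delta k) (zat z' k) (zat z' k.+1)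
             = \prod_(1 <= k < j.+1) qcond (Delta k) (zat z k) (zat z k.+1).
  apply: eq_big_nat => k /andP [k_gt0 lt_kj1].
  rewrite !zat_z' //; first by rewrite eqSS ltn_eqF.
  by rewrite ltn_eqF // ltnW.
rewrite [in RHS]big_nat_recr // prod_z' zat_z'_j2 !zat_z' ?ltn_eqF //=.
by rewrite !mulrA mulrAC.
Qed.

Lemma law_partial_formula t x j : (0 < d)%N -> (j < d)%N -> (j < t)%N ->
  law t x = partial_formula j.+1 t x.
Proof.
move=> d_gt0; elim: j => [|j IHj] lt_jd lt_jt; first exact: law_partial_formula1.
by rewrite IHj ?(ltnW lt_jd) ?(ltnW lt_jt) // partial_formulaS.
Qed.

Lemma law_formula t x : (0 < d)%N ->
  (forall i, din e i = finset.set0 -> alpha i = 0) ->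
  (forall j p, path e j p -> (size p <= d)%N) ->
  (d <= t)%N -> law t x = formula e w r alpha d x.
Proof.
move=> d_gt0 alpha0 short le_dt.
rewrite (law_partial_formula t x d.-1) ?prednK //.
apply: eq_big => [z|z /andP [z_supp _]].
  rewrite /supported_upto; case: (supported e z) => //=.
  by apply/forallP => k; rewrite leqNgt ltn_ord.
rewrite marginal_orphans ?zat_restr //.
by apply: (Delta_eq0 d.+1) => j p /short.
Qed.

End Expansion.
End Marginals.

Theorem mainTheorem12 (R : realType) (n : nat) (e : rel 'I_n)
  (w : 'I_n -> 'I_n -> R) (r alpha : 'I_n -> R) (d : nat) :
  dag_network e w r alpha -> max_path_len e d -> (0 < d)%N ->
  forall (t : nat), (d <= t)%N -> forall x : {ffun 'I_n -> bool},
    law e w r alpha t x = stationary e w r alpha x /\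
    law e w r alpha t x = formula e w r alpha d x.
Proof.
move=> [_ _ _ _ [alpha0 _]] [_ short] d_gt0 t le_dt x.
have lawE s : (d <= s)%N -> law e w r alpha s x = formula e w r alpha d x.
  by move=> le_ds; apply: law_formula.
split; last exact: lawE.
rewrite /stationary lawE //; apply/esym/norm_lim_near_cst.
by exists d => // s /lawE.
Qed.
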